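(* Let $2\le r\le n$ be integers and fix positive integers $s_2,\ldots,s_r$. Then there exists an integer $M$ (depending on $n$ and $(s_2,\ldots,s_r)$) such that $H_n(s_1,s_2,\ldots,s_r)$ is not an integer for every integer $s_1>M$.
   Context: $H_n(s_1,\ldots,s_r)=\sum_{1\le k_1<k_2<\cdots<k_r\le n}\frac{1}{k_1^{s_1}\cdots k_r^{s_r}}$, where $s_1,\dots,s_r$ are positive integers. *)

From HB Require Import structures.
From mathcomp Require Import all_boot all_order all_algebra.
Set Implicit Arguments. Unset Strict Implicit. Unset Printing Implicit Defensive.
Import Order.TTheory GRing.Theory Num.Theory.
Local Open Scope ring_scope.

(* Hsum lo n [:: s_1; ...; s_r] =
     sum over lo <= k_1 < k_2 < ... < k_r <= n of 1/(k_1^s_1 ... k_r^s_r). *)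
Fixpoint Hsum (lo n : nat) (s : seq nat) : rat :=
  match s with
  | [::] => 1
  | a :: s' => \sum_(lo <= k < n.+1) ((k%:R ^+ a)^-1 * Hsum k.+1 n s')
  end.

Definition H (n : nat) (s : seq nat) : rat := Hsum 1 n s.

From HB Require Import structures.
From mathcomp Require Import all_boot all_order all_algebra.
From mathcomp Require Import zify lra.
Import Order.TTheory GRing.Theory Num.Theory.
Local Open Scope ring_scope.

(* Peeling off the term k_1 = 1 gives H_n(s_1, s') = A + E(s_1), where
   A = H_n restricted to 2 <= k_2 < ... and E(s_1) collects the terms with
   k_1 >= 2, so 0 <= E(s_1) <= C / 2^s_1 for a constant C.  If r < n then
   E(s_1) > 0, so once C / 2^s_1 is below the distance from A to the next
   integer, A + E(s_1) lies strictly between two consecutive integers.  If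
   r = n, only the indices k_i = i contribute and H_n is 1/(2^s_2 ... n^s_n),
   which lies in (0, 1). *)

Lemma not_int_between {R : numDomainType} (x : R) (m : int) :
  m%:~R < x -> x < (m + 1)%:~R -> forall z : int, x <> z%:~R.
Proof. by move=> + + z xz; rewrite xz !ltr_int; lia. Qed.

Lemma not_int_addr_small {R : archiRealDomainType} (x e : R) :
  0 < e -> e < (Num.floor x + 1)%:~R - x -> forall z : int, x + e <> z%:~R.
Proof.
move=> e_gt0 e_small; have /andP[floor_le _] := floor_itv x.
by apply: (@not_int_between _ _ (Num.floor x)); lra.
Qed.

Lemma eventually_lt_div_exp2 {R : archiRealFieldType} {C d : R} :
  0 <= C -> 0 < d -> exists M : nat, forall s, (M < s)%N -> C / 2%:R ^+ s < d.
Proof.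
move=> C_ge0 d_gt0; exists (Num.Def.archi_bound (C / d)) => s Ms.
have := archi_boundP (divr_ge0 C_ge0 (ltW d_gt0)).
rewrite ltr_pdivrMr // ltr_pdivrMr ?exprn_gt0 // => /lt_le_trans; apply.
rewrite mulrC ler_wpM2l ?(ltW d_gt0) // -natrX ler_nat.
exact/ltnW/(leq_trans Ms)/ltnW/ltn_expl.
Qed.

Lemma Hsum_ge0 lo n s : 0 <= Hsum lo n s.
Proof.
elim: s lo => [|a s IH] lo //=.
by apply: sumr_ge0 => k _; rewrite mulr_ge0 ?invr_ge0 ?exprn_ge0.
Qed.

Lemma Hsum_gt0 lo n s : (0 < lo)%N -> (size s <= n.+1 - lo)%N -> 0 < Hsum lo n s.
Proof.
elim: s lo => [|a s IH] lo //= lo_gt0 size_s.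
rewrite big_ltn; last by lia.
apply: ltr_wpDr.
  by apply: sumr_ge0 => k _; rewrite mulr_ge0 ?invr_ge0 ?exprn_ge0 ?Hsum_ge0.
by rewrite mulr_gt0 ?invr_gt0 ?exprn_gt0 ?ltr0n // IH //; lia.
Qed.

Lemma Hsum_eq0 lo n s : (n.+1 - lo < size s)%N -> Hsum lo n s = 0.
Proof.
elim: s lo => [|a s IH] lo //= size_s.
rewrite big_nat_cond big1 // => k /andP[/andP[lo_k k_n] _].
by rewrite IH ?mulr0 //; lia.
Qed.

Definition Hsum_tail (lo n a : nat) (s : seq nat) : rat :=
  \sum_(lo.+1 <= k < n.+1) ((k%:R ^+ a)^-1 * Hsum k.+1 n s).

Lemma Hsum_cons lo n a s : (lo <= n)%N ->
  Hsum lo n (a :: s) = (lo%:R ^+ a)^-1 * Hsum lo.+1 n s + Hsum_tail lo n a s.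
Proof. by move=> lo_n; rewrite /= big_ltn. Qed.

Lemma Hsum_tail_ge0 lo n a s : 0 <= Hsum_tail lo n a s.
Proof. by apply: sumr_ge0 => k _; rewrite mulr_ge0 ?invr_ge0 ?exprn_ge0 ?Hsum_ge0. Qed.

Lemma Hsum_tail_gt0 lo n a s :
  (lo < n)%N -> (size s <= n - lo.+1)%N -> 0 < Hsum_tail lo n a s.
Proof.
move=> lo_n size_s; rewrite /Hsum_tail big_ltn; last by lia.
apply: ltr_wpDr; first exact: (Hsum_tail_ge0 lo.+1).
by rewrite mulr_gt0 ?invr_gt0 ?exprn_gt0 ?ltr0n // Hsum_gt0 //; lia.
Qed.

Lemma Hsum_tail_eq0 lo n a s : size s = (n - lo)%N -> Hsum_tail lo n a s = 0.
Proof.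
move=> size_s; rewrite /Hsum_tail big_nat_cond big1 // => k /andP[/andP[lo_k k_n] _].
by rewrite Hsum_eq0 ?mulr0 //; lia.
Qed.

Lemma Hsum_tail_le lo n a s :
  Hsum_tail lo n a s <=
    (lo.+1%:R ^+ a)^-1 * \sum_(lo.+1 <= k < n.+1) Hsum k.+1 n s.
Proof.
rewrite /Hsum_tail mulr_sumr big_nat_cond [leRHS]big_nat_cond.
apply: ler_sum => k /andP[/andP[lo_k _] _].
rewrite ler_wpM2r ?Hsum_ge0 // lef_pV2 ?posrE ?exprn_gt0 ?ltr0n //; last by lia.
by rewrite lerXn2r ?nnegrE ?ler_nat //; lia.
Qed.

Lemma Hsum_le1 lo n s : (0 < lo)%N -> size s = (n.+1 - lo)%N -> Hsum lo n s <= 1.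
Proof.
elim: s lo => [|a s IH] lo lo_gt0 size_s; first exact: lexx.
rewrite /= in size_s.
rewrite Hsum_cons ?Hsum_tail_eq0 ?addr0; [|lia|lia].
rewrite -[1]mulr1 ler_pM ?invr_ge0 ?exprn_ge0 ?Hsum_ge0 ?IH //; last by lia.
by rewrite invf_le1 ?exprn_gt0 ?ltr0n // exprn_ege1 // ler1n.
Qed.

Lemma Hsum_lt1 lo n a s : (1 < lo <= n)%N -> (0 < a)%N ->
  size s = (n - lo)%N -> Hsum lo n (a :: s) < 1.
Proof.
move=> /andP[lo_gt1 lo_n] a_gt0 size_s.
rewrite Hsum_cons ?Hsum_tail_eq0 ?addr0 //.
apply: (@le_lt_trans _ _ (lo%:R ^+ a)^-1).
  by rewrite -[leRHS]mulr1 ler_wpM2l ?invr_ge0 ?exprn_ge0 // Hsum_le1 //; lia.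
rewrite invf_lt1 ?exprn_gt0 ?ltr0n 1?ltnW // -natrX ltr1n.
by rewrite -[1%N](expn0 lo) ltn_exp2l.
Qed.

Theorem lemma3 (n r : nat) (s' : seq nat) :
  (2 <= r)%N -> (r <= n)%N -> size s' = r.-1 -> all (fun a => 0 < a)%N s' ->
  exists M : nat, forall s1 : nat, (M < s1)%N ->
    forall z : int, H n (s1 :: s') <> z%:~R.
Proof.
move=> r_ge2 r_le_n size_s' s'_pos.
have H_cons s1 : H n (s1 :: s') = Hsum 2 n s' + Hsum_tail 1 n s1 s'.
  by rewrite /H Hsum_cons ?expr1n ?invr1 ?mul1r //; lia.
have [r_lt_n|r_eq_n] : (r < n)%N \/ r = n by lia.
- set A := Hsum 2 n s'.
  set C := \sum_(2 <= k < n.+1) Hsum k.+1 n s'.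
  have C_ge0 : 0 <= C by apply: sumr_ge0 => k _; apply: Hsum_ge0.
  have gap_gt0 : 0 < (Num.floor A + 1)%:~R - A.
    by have /andP[_] := floor_itv A; rewrite subr_gt0.
  have [M small_tail] := eventually_lt_div_exp2 C_ge0 gap_gt0.
  exists M => s1 M_s1; rewrite H_cons; apply: not_int_addr_small.
    by apply: Hsum_tail_gt0; lia.
  by apply: le_lt_trans (Hsum_tail_le 1 n s1 s') _; rewrite mulrC small_tail.
- exists 0%N => s1 _.
  case: s' size_s' s'_pos H_cons => [|a t] size_s'; rewrite /= in size_s'.
    by lia.
  move=> /andP[a_gt0 _] H_cons.
  rewrite H_cons Hsum_tail_eq0 ?addr0; last by rewrite /=; lia.
  apply: (@not_int_between _ _ 0).
    by apply: Hsum_gt0 => //=; lia.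
  by apply: Hsum_lt1 => //; lia.
Qed.
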